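(* Let $L>0$ and $f\in C^1_{\mathrm{pw}}[-L,L]$ with break points $-L=z_0<z_1<\dots<z_N=L$, so that $f\in C^1[z_{j-1},z_j]$ and on each $\tau_j=(z_{j-1},z_j)$ either $f'\le0$ throughout or $f'>0$ throughout. Suppose $f(x)\ge f_{\min}>0$ for all $x\in[-L,L]$. Then $$\prod_{\ell=1}^{N-1}\max\Big\{\frac{f^+(z_\ell)}{f^-(z_\ell)},1\Big\}\le\exp\Big(\frac{1}{f_{\min}}\mathrm{Var}(f)\Big)\quad\text{and}\quad\prod_{\ell=1}^{N-1}\max\Big\{\frac{f^-(z_\ell)}{f^+(z_\ell)},1\Big\}\le\exp\Big(\frac{1}{f_{\min}}\mathrm{Var}(f)\Big).$$
   Context: $C^1_{\mathrm{pw}}[-L,L]$ is the set of $g:[-L,L]\to\mathbb{R}$ for which there is a finite partition $-L=z_0<\dots<z_N=L$ with $g\in C^1[z_{j-1},z_j]$ for each $j$ and, on each $(z_{j-1},z_j)$, either $g'>0$ throughout or $g'\le0$ throughout. $f^+(z)$ and $f^-(z)$ are the right and left one-sided limits at $z$; $[f]_{z_j}=f^-(z_j)-f^+(z_j)$ for $1\le j\le N-1$; $\partial_{\mathrm{pw}}f=f'$ on each open subinterval; $\mathrm{Var}(f)=\sum_{\ell=1}^{N-1}|[f]_{z_\ell}|+\int_{-L}^L|\partial_{\mathrm{pw}}f(s)|\,ds$. *)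

From HB Require Import structures.
From mathcomp Require Import all_boot all_order all_algebra.
From mathcomp Require Import all_classical all_reals all_analysis.
Set Implicit Arguments. Unset Strict Implicit. Unset Printing Implicit Defensive.
Import Order.TTheory GRing.Theory Num.Theory.
Import numFieldNormedType.Exports.
Local Open Scope classical_set_scope.
Local Open Scope ring_scope.

Section Defs.
Variable R : realType.

Definition C1_closed (a b : R) (g : R -> R) : Prop :=
  exists dg : R -> R,
    (forall x, a <= x <= b ->
       (fun y => (g y - g x) / (y - x)) @
         within (fun y => a <= y <= b /\ y != x) (nbhs x) --> dg x) /\
    {within `[a, b], continuous dg}.

(* f is piecewise C^1 on [-L,L] with respect to the partition
   -L = z 0 < z 1 < ... < z N = L: on each [z (j-1), z j], f coincides on the
   open interval with a C^1 function on the closed interval (so f has a C^1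
   extension there), and on each open subinterval either f' > 0 throughout or
   f' <= 0 throughout. *)
Definition pwC1 (L : R) (N : nat) (z : nat -> R) (f : R -> R) : Prop :=
  [/\ (0 < N)%N, z 0%N = - L, z N = L,
      (forall j, (j < N)%N -> z j < z j.+1) &
      (forall j, (j < N)%N ->
         (exists g, C1_closed (z j) (z j.+1) g /\
                    (forall x, z j < x < z j.+1 -> f x = g x)) /\
         ((forall x, z j < x < z j.+1 -> 0 < derive1 f x) \/
          (forall x, z j < x < z j.+1 -> derive1 f x <= 0)))].

Definition fplus (f : R -> R) (x : R) : R := lim (f @ at_right x).
Definition fminus (f : R -> R) (x : R) : R := lim (f @ at_left x).

Definition jump (f : R -> R) (x : R) : R := fminus f x - fplus f x.

(* piecewise derivative: f' on the open subintervals (its values at the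
   finitely many break points are irrelevant for the integral) *)
Definition dpw (f : R -> R) : R -> R := derive1 f.

Definition Var (L : R) (N : nat) (z : nat -> R) (f : R -> R) : R :=
  \sum_(1 <= l < N) `|jump f (z l)| +
  Rintegral lebesgue_measure `[- L, L] (fun s => `|dpw f s|).

End Defs.

From HB Require Import structures.
From mathcomp Require Import all_boot all_order all_algebra.
From mathcomp Require Import all_classical all_reals all_analysis.
Import Order.TTheory GRing.Theory Num.Theory.
Import numFieldNormedType.Exports.
Local Open Scope classical_set_scope.
Local Open Scope ring_scope.

(* Only the jumps of f matter, the integral part of Var f being nonnegative.
   Each one-sided limit of f at a break point is the endpoint value of the C^1
   extension of f on an adjacent piece, hence at least f_min; and for
   0 < m <= q we have max (p / q, 1) <= 1 + |p - q| / m <= exp (|p - q| / m),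
   so the product over the break points is at most the exponential of the
   sum of the jumps divided by f_min. *)

Section OneSidedLimits.
Local Set Implicit Arguments. Local Unset Strict Implicit.
Variable R : realType.
Implicit Types (a b m x : R) (f g : R -> R).

Lemma difference_quotient_cvg_continuous (D : R -> Prop) g (dg : R) x :
  (fun y => (g y - g x) / (y - x)) @ within (fun y => D y /\ y != x) (nbhs x)
    --> dg ->
  g @ within (fun y => D y /\ y != x) (nbhs x) --> g x.
Proof.
set W := within _ _ => dq_cvg.
have : (fun y => (g y - g x) / (y - x) * (y - x) + g x) @ W --> dg * 0 + g x.
  apply: cvgD; last exact: cvg_cst.
  apply: cvgM => //; rewrite -(subrr x); apply: cvg_within_filter.
  by apply: cvgB; [exact: cvg_id | exact: cvg_cst].
rewrite mulr0 add0r; apply: cvg_trans; apply: near_eq_cvg; near=> y.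
have [_ yx] : D y /\ y != x by near: y; exact: near_withinT.
by rewrite divfK ?subr_eq0 // subrK.
Unshelve. all: by end_near.
Qed.

Lemma C1_closed_continuous_within a b g x : C1_closed a b g -> a <= x <= b ->
  g @ within (fun y => a <= y <= b /\ y != x) (nbhs x) --> g x.
Proof.
by move=> [dg [dg_cvg _]] /dg_cvg; exact: difference_quotient_cvg_continuous.
Qed.

Lemma at_right_within_closed a b : a < b ->
  a^'+ `=>` within (fun y => a <= y <= b /\ y != a) (nbhs a).
Proof.
move=> ab P; rewrite /at_right /within /= => aP.
near=> y => ay; apply: (near aP y) => //.
split; last by rewrite gt_eqF.
by rewrite (ltW ay) /=; near: y; exact: lt_le_nbhsl.
Unshelve. all: by end_near.
Qed.

Lemma at_left_within_closed a b : a < b ->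
  b^'- `=>` within (fun y => a <= y <= b /\ y != b) (nbhs b).
Proof.
move=> ab P; rewrite /at_left /within /= => bP.
near=> y => yb; apply: (near bP y) => //.
split; last by rewrite lt_eqF.
by rewrite (ltW yb) andbT; near: y; exact: lt_le_nbhsr.
Unshelve. all: by end_near.
Qed.

Lemma nbhs_right_itv a b : a < b -> \forall y \near a^'+, a < y < b.
Proof.
move=> ab; near=> y; apply/andP; split; near: y.
- exact: nbhs_right_gt.
- exact: nbhs_right_lt.
Unshelve. all: by end_near.
Qed.

Lemma nbhs_left_itv a b : a < b -> \forall y \near b^'-, a < y < b.
Proof.
move=> ab; near=> y; apply/andP; split; near: y.
- exact: nbhs_left_gt.
- exact: nbhs_left_lt.
Unshelve. all: by end_near.
Qed.

Lemma C1_closed_cvg_at_right a b g f : a < b -> C1_closed a b g ->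
  (forall x, a < x < b -> f x = g x) -> f @ a^'+ --> g a.
Proof.
move=> ab g_C1 fg; apply: (@cvg_trans _ (g @ a^'+)).
  by apply: near_eq_cvg; apply: filterS (nbhs_right_itv ab) => y /fg ->.
apply: (cvg_trans _ (C1_closed_continuous_within g_C1 _)); last by rewrite lexx ltW.
exact: cvg_app (at_right_within_closed ab).
Qed.

Lemma C1_closed_cvg_at_left a b g f : a < b -> C1_closed a b g ->
  (forall x, a < x < b -> f x = g x) -> f @ b^'- --> g b.
Proof.
move=> ab g_C1 fg; apply: (@cvg_trans _ (g @ b^'-)).
  by apply: near_eq_cvg; apply: filterS (nbhs_left_itv ab) => y /fg ->.
apply: (cvg_trans _ (C1_closed_continuous_within g_C1 _)); last by rewrite lexx ltW.
exact: cvg_app (at_left_within_closed ab).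
Qed.

Lemma fplus_ge a b f m : a < b ->
  (exists g, C1_closed a b g /\ forall x, a < x < b -> f x = g x) ->
  (forall x, a < x < b -> m <= f x) -> m <= fplus f a.
Proof.
move=> ab [g [g_C1 fg]] f_ge; apply: limr_ge.
  exact: cvgP (C1_closed_cvg_at_right ab g_C1 fg).
exact: filterS f_ge (nbhs_right_itv ab).
Qed.

Lemma fminus_ge a b f m : a < b ->
  (exists g, C1_closed a b g /\ forall x, a < x < b -> f x = g x) ->
  (forall x, a < x < b -> m <= f x) -> m <= fminus f b.
Proof.
move=> ab [g [g_C1 fg]] f_ge; apply: limr_ge.
  exact: cvgP (C1_closed_cvg_at_left ab g_C1 fg).
exact: filterS f_ge (nbhs_left_itv ab).
Qed.

End OneSidedLimits.

Section Partition.
Local Set Implicit Arguments. Local Unset Strict Implicit.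
Variables (R : realType) (L : R) (N : nat) (z : nat -> R) (f : R -> R).
Hypothesis pwf : pwC1 L N z f.

Lemma pwC1_node_in j : (j <= N)%N -> - L <= z j <= L.
Proof.
case: pwf => _ z0 zN zinc _ jN.
have z_mono : {in [pred i | (i <= N)%N] &, {homo z : i k / (i <= k)%N >-> i <= k}}.
  apply: Order.NatMonotonyTheory.nondecn_inP.
  - by move=> i k _ kN l /andP[_ /ltnW lk]; rewrite inE (leq_trans lk).
  - by move=> i _ /[!inE] iN; exact/ltW/zinc.
by rewrite -z0 -zN !z_mono ?inE.
Qed.

Lemma pwC1_one_sided_limits_ge m l : (forall x, - L <= x <= L -> m <= f x) ->
  (0 < l < N)%N -> m <= fplus f (z l) /\ m <= fminus f (z l).
Proof.
move=> f_ge /andP[l_gt0 lN]; case: pwf => _ _ _ zinc pieces.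
have f_ge_on j : (j < N)%N -> forall x, z j < x < z j.+1 -> m <= f x.
  move=> jN x /andP[zjx xzj]; apply: f_ge.
  have /andP[zj_ge _] := pwC1_node_in (ltnW jN).
  have /andP[_ zj1_le] := pwC1_node_in jN.
  by rewrite (le_trans zj_ge (ltW zjx)) (le_trans (ltW xzj) zj1_le).
have lN' : (l.-1 < N)%N by rewrite (leq_ltn_trans (leq_pred l)).
split; first exact: fplus_ge (zinc l lN) (pieces l lN).1 (f_ge_on l lN).
have := fminus_ge (zinc _ lN') (pieces _ lN').1 (f_ge_on _ lN').
by rewrite prednK.
Qed.

End Partition.

Section JumpBounds.
Local Set Implicit Arguments. Local Unset Strict Implicit.
Variable R : realType.

Lemma sum_jump_le_Var (L : R) (N : nat) (z : nat -> R) f :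
  \sum_(1 <= l < N) `|jump f (z l)| <= Var L N z f.
Proof. by rewrite /Var lerDl; apply: Rintegral_ge0 => x _. Qed.

Lemma max_div1_le_expR (p q m : R) : 0 < m -> m <= q ->
  Num.max (p / q) 1 <= expR (m^-1 * `|p - q|).
Proof.
move=> m_gt0 mq; have q_gt0 : 0 < q by exact: lt_le_trans mq.
have exp_ge1 : 1 <= expR (m^-1 * `|p - q|).
  by rewrite -expR0 ler_expR mulr_ge0 // invr_ge0 ltW.
rewrite ge_max exp_ge1 andbT; have [pq|qp] := leP p q.
  by apply: le_trans exp_ge1; rewrite ler_pdivrMr // mul1r.
apply: le_trans (expR_ge1Dx _).
have -> : p / q = 1 + (p - q) / q by rewrite mulrBl divff ?gt_eqF // addrC subrK.
rewrite lerD2l gtr0_norm ?subr_gt0 // mulrC ler_wpM2r ?subr_ge0 ?(ltW qp) //.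
by rewrite lef_pV2 ?posrE.
Qed.

Lemma prod_max_div1_le_expR (I : eqType) (r : seq I)
    (p q : I -> R) (m : R) : 0 < m -> {in r, forall i, m <= q i} ->
  \prod_(i <- r) Num.max (p i / q i) 1
    <= expR (m^-1 * \sum_(i <- r) `|p i - q i|).
Proof.
move=> m_gt0 q_ge; rewrite mulr_sumr expR_sum big_seq [leRHS]big_seq.
apply: ler_prod => i ir; rewrite le_max ler01 orbT.
exact: max_div1_le_expR (q_ge i ir).
Qed.

End JumpBounds.

Theorem lemma6p1 (R : realType) (L : R) (N : nat) (z : nat -> R)
    (f : R -> R) (fmin : R) :
  0 < L -> pwC1 L N z f -> 0 < fmin ->
  (forall x, - L <= x <= L -> fmin <= f x) ->
  \prod_(1 <= l < N) Num.max (fplus f (z l) / fminus f (z l)) 1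
     <= expR (fmin^-1 * Var L N z f) /\
  \prod_(1 <= l < N) Num.max (fminus f (z l) / fplus f (z l)) 1
     <= expR (fmin^-1 * Var L N z f).
Proof.
move=> _ pwf fmin_gt0 f_ge.
have lim_ge : {in index_iota 1 N, forall l,
    fmin <= fplus f (z l) /\ fmin <= fminus f (z l)}.
  by move=> l; rewrite mem_index_iota => /(pwC1_one_sided_limits_ge pwf f_ge).
have jumps_le : fmin^-1 * \sum_(1 <= l < N) `|jump f (z l)|
    <= fmin^-1 * Var L N z f.
  by rewrite ler_wpM2l ?invr_ge0 ?(ltW fmin_gt0) ?sum_jump_le_Var.
split; apply: le_trans (prod_max_div1_le_expR _ fmin_gt0 _) _.
- by move=> l /lim_ge[].
- by rewrite ler_expR; under eq_bigr do rewrite distrC.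
- by move=> l /lim_ge[].
- by rewrite ler_expR.
Qed.
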